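(* Let $P(t)$ and $Q(t)$ be real polynomials of degree at most $2$, and let $I\subset\mathbb{R}$ be an interval such that $P>0$ and $Q>0$ on $I$. Suppose $\Delta_P>0$ and that there is a constant $T>0$ such that (i) $\Delta_Q\ge T^{3/2}\Delta_P$, and (ii) $TP(t)\ge Q(t)$ for all $t\in I$. Then $G(t)=\sqrt{P(t)}-\sqrt{Q(t)}$ is convex on $I$.
   Context: For a real polynomial written as $R(t)=\alpha+2\beta t+\gamma t^2$ (where $\gamma=0$ is allowed), its discriminant is defined as $\Delta_R=\beta^2-\alpha\gamma$. *)

From Stdlib Require Import Reals Lra.
Open Scope R_scope.

(* The real polynomial R(t) = alpha + 2 beta t + gamma t^2 (gamma = 0 allowed);
   every real polynomial of degree at most 2 has this form. *)
Definition quad (alpha beta gamma : R) (t : R) : R :=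
  alpha + 2 * beta * t + gamma * t ^ 2.

Definition discr (alpha beta gamma : R) : R := beta ^ 2 - alpha * gamma.

Definition is_interval (I : R -> Prop) : Prop :=
  forall x y z, I x -> I y -> x <= z <= y -> I z.

Definition convex_on (I : R -> Prop) (f : R -> R) : Prop :=
  forall x y l, I x -> I y -> 0 <= l <= 1 ->
    f (l * x + (1 - l) * y) <= l * f x + (1 - l) * f y.

From Stdlib Require Import Reals Lra Psatz.
From Coquelicot Require Import Coquelicot.
Open Scope R_scope.

(* A function whose second derivative is nonnegative on an interval is convex there,
   and sqrt R has second derivative -Delta_R / R^(3/2).  Hence
   G'' = Delta_Q / Q^(3/2) - Delta_P / P^(3/2), and this is nonnegative because
   Q^(3/2) <= T^(3/2) P^(3/2) by (ii) while Delta_Q >= T^(3/2) Delta_P >= 0 by (i). *)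

Lemma is_derive_sqrt_quad a b c t : 0 < quad a b c t ->
  is_derive (fun t => sqrt (quad a b c t)) t ((b + c * t) / sqrt (quad a b c t)).
Proof.
  intros Hpos. unfold quad in *.
  auto_derive; replace (t * (t * 1)) with (t ^ 2) by ring; [exact Hpos |].
  assert (0 < sqrt (a + 2 * b * t + c * t ^ 2)) by now apply sqrt_lt_R0.
  field; lra.
Qed.

Lemma is_derive_sqrt_quad_slope a b c t : 0 < quad a b c t ->
  is_derive (fun t => (b + c * t) / sqrt (quad a b c t)) t
    (- discr a b c / (quad a b c t * sqrt (quad a b c t))).
Proof.
  intros Hpos. unfold quad, discr in *.
  assert (Hs : 0 < sqrt (a + 2 * b * t + c * t ^ 2)) by now apply sqrt_lt_R0.
  auto_derive; replace (t * (t * 1)) with (t ^ 2) by ring.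
  - repeat split; lra.
  - assert (Hsq := sqrt_sqrt _ (Rlt_le _ _ Hpos)).
    set (s := sqrt (a + 2 * b * t + c * t ^ 2)) in *.
    assert (Hsq2 : a + 2 * b * t + c * t ^ 2 = s * s) by (symmetry; exact Hsq).
    rewrite Hsq2. field_simplify; [| lra | lra].
    replace (s ^ 2) with (a + 2 * b * t + c * t ^ 2) by (rewrite Hsq2; ring).
    field. lra.
Qed.

Lemma Rpower_3_2 T : 0 < T -> Rpower T (3 / 2) = T * sqrt T.
Proof.
  intros HT. replace (3 / 2) with (1 + / 2) by field.
  now rewrite Rpower_plus, Rpower_1, Rpower_sqrt.
Qed.

Lemma mul_sqrt_le_scaled p q T : 0 <= q -> 0 < T -> q <= T * p ->
  q * sqrt q <= T * sqrt T * (p * sqrt p).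
Proof.
  intros Hq HT Hqp.
  assert (Hs : sqrt q <= sqrt T * sqrt p).
  { rewrite <- sqrt_mult by nra. now apply sqrt_le_1_alt. }
  replace (T * sqrt T * (p * sqrt p)) with (T * p * (sqrt T * sqrt p)) by ring.
  apply Rmult_le_compat; auto using sqrt_pos.
Qed.

Lemma discr_div_pow32_le p q dp dq T : 0 < p -> 0 < q -> 0 < T ->
  q <= T * p -> 0 <= dp -> T * sqrt T * dp <= dq ->
  dp / (p * sqrt p) <= dq / (q * sqrt q).
Proof.
  intros Hp Hq HT Hqp Hdp Hdq.
  assert (Hsp : 0 < sqrt p) by now apply sqrt_lt_R0.
  assert (Hsq : 0 < sqrt q) by now apply sqrt_lt_R0.
  assert (HP : 0 < p * sqrt p) by now apply Rmult_lt_0_compat.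
  assert (HQ : 0 < q * sqrt q) by now apply Rmult_lt_0_compat.
  assert (Hk := mul_sqrt_le_scaled p q T (Rlt_le _ _ Hq) HT Hqp).
  apply Rle_trans with (T * sqrt T * dp / (q * sqrt q)).
  - apply (Rmult_le_reg_r (p * sqrt p * (q * sqrt q))); [now apply Rmult_lt_0_compat |].
    replace (dp / (p * sqrt p) * (p * sqrt p * (q * sqrt q))) with (dp * (q * sqrt q))
      by (field; lra).
    replace (T * sqrt T * dp / (q * sqrt q) * (p * sqrt p * (q * sqrt q)))
      with (dp * (T * sqrt T * (p * sqrt p))) by (field; lra).
    now apply Rmult_le_compat_l.
  - apply Rmult_le_compat_r; [left; now apply Rinv_0_lt_compat | exact Hdq].
Qed.

Lemma continuity_pt_of_is_derive f df x : is_derive f x df -> continuity_pt f x.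
Proof.
  intros Hd. apply continuity_pt_filterlim.
  apply (ex_derive_continuous (K := R_AbsRing) (V := R_NormedModule)).
  now exists df.
Qed.

Section ConvexFromDerivative.

Variables (I : R -> Prop) (g g' : R -> R).
Hypothesis hI : is_interval I.
Hypothesis hg : forall t, I t -> is_derive g t (g' t).

Lemma mvt_on_interval x y : I x -> I y -> x <= y ->
  exists c, x <= c <= y /\ g y - g x = g' c * (y - x).
Proof.
  intros Hx Hy Hxy.
  assert (Hin : forall u, x <= u <= y -> I u) by (intros; now apply (hI x y)).
  destruct (MVT_gen g x y g') as [c [Hc E]];
    rewrite ?Rmin_left, ?Rmax_right in * by lra.
  - intros u Hu. apply hg, Hin. lra.
  - intros u Hu. apply (continuity_pt_of_is_derive _ (g' u)), hg, Hin, Hu.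
  - now exists c.
Qed.

Lemma derive_nonneg_nondecreasing x y : (forall t, I t -> 0 <= g' t) ->
  I x -> I y -> x <= y -> g x <= g y.
Proof.
  intros Hpos Hx Hy Hxy.
  destruct (mvt_on_interval x y Hx Hy Hxy) as [c [Hc E]].
  assert (0 <= g' c) by (apply Hpos, (hI x y); auto).
  nra.
Qed.

Lemma convex_on_strict_cases :
  (forall x y l, I x -> I y -> x < y -> 0 < l < 1 ->
     g (l * x + (1 - l) * y) <= l * g x + (1 - l) * g y) ->
  convex_on I g.
Proof.
  intros Hcore x y l Hx Hy Hl.
  destruct (Req_dec l 0) as [-> | Hl0].
  { replace (0 * x + (1 - 0) * y) with y by ring. lra. }
  destruct (Req_dec l 1) as [-> | Hl1].
  { replace (1 * x + (1 - 1) * y) with x by ring. lra. }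
  destruct (Rtotal_order x y) as [Hxy | [<- | Hxy]].
  - apply Hcore; auto; lra.
  - replace (l * x + (1 - l) * x) with x by ring. lra.
  - replace (l * x + (1 - l) * y) with ((1 - l) * y + (1 - (1 - l)) * x) by ring.
    assert (H := Hcore y x (1 - l) Hy Hx Hxy ltac:(lra)). lra.
Qed.

(* The two slopes of g on [x, z] and [z, y] are values of g' at points c1 <= c2. *)
Lemma convex_on_of_derive_nondecreasing :
  (forall x y, I x -> I y -> x <= y -> g' x <= g' y) -> convex_on I g.
Proof.
  intros Hmono. apply convex_on_strict_cases.
  intros x y l Hx Hy Hxy Hl.
  set (z := l * x + (1 - l) * y).
  assert (Hxz : x < z) by (unfold z; nra).
  assert (Hzy : z < y) by (unfold z; nra).
  assert (Iz : I z) by (apply (hI x y); auto; lra).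
  destruct (mvt_on_interval x z Hx Iz (Rlt_le _ _ Hxz)) as [c1 [Hc1 E1]].
  destruct (mvt_on_interval z y Iz Hy (Rlt_le _ _ Hzy)) as [c2 [Hc2 E2]].
  assert (Hc12 : g' c1 <= g' c2).
  { apply Hmono; [apply (hI x z) | apply (hI z y) |]; auto; lra. }
  replace (z - x) with ((1 - l) * (y - x)) in E1 by (unfold z; ring).
  replace (y - z) with (l * (y - x)) in E2 by (unfold z; ring).
  assert (Hgap : l * g x + (1 - l) * g y - g z =
                 l * (1 - l) * (y - x) * (g' c2 - g' c1)) by nra.
  assert (0 <= l * (1 - l) * (y - x)) by (apply Rmult_le_pos; nra).
  nra.
Qed.

End ConvexFromDerivative.

Lemma convex_on_of_derive2_nonneg I g g' g'' : is_interval I ->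
  (forall t, I t -> is_derive g t (g' t)) ->
  (forall t, I t -> is_derive g' t (g'' t)) ->
  (forall t, I t -> 0 <= g'' t) ->
  convex_on I g.
Proof.
  intros hI hg hg' Hpos.
  apply (convex_on_of_derive_nondecreasing I g g' hI hg).
  intros x y Hx Hy Hxy. now apply (derive_nonneg_nondecreasing I g' g'').
Qed.

Theorem lemma7 (a b c a' b' c' : R) (I : R -> Prop) (T : R)
  (hI : is_interval I)
  (hP : forall t, I t -> 0 < quad a b c t)
  (hQ : forall t, I t -> 0 < quad a' b' c' t)
  (hDP : 0 < discr a b c)
  (hT : 0 < T)
  (h1 : discr a' b' c' >= Rpower T (3 / 2) * discr a b c)
  (h2 : forall t, I t -> T * quad a b c t >= quad a' b' c' t) :
  convex_on I (fun t => sqrt (quad a b c t) - sqrt (quad a' b' c' t)).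
Proof.
  rewrite Rpower_3_2 in h1 by exact hT.
  apply (convex_on_of_derive2_nonneg I _
    (fun t => (b + c * t) / sqrt (quad a b c t)
              - (b' + c' * t) / sqrt (quad a' b' c' t))
    (fun t => - discr a b c / (quad a b c t * sqrt (quad a b c t))
              - - discr a' b' c' / (quad a' b' c' t * sqrt (quad a' b' c' t))) hI).
  - intros t Ht. apply (is_derive_minus (fun t => sqrt (quad a b c t)));
      apply is_derive_sqrt_quad; auto.
  - intros t Ht. apply (is_derive_minus (fun t => (b + c * t) / sqrt (quad a b c t)));
      apply is_derive_sqrt_quad_slope; auto.
  - intros t Ht.
    assert (Hle := discr_div_pow32_le (quad a b c t) (quad a' b' c' t)
      (discr a b c) (discr a' b' c') T (hP t Ht) (hQ t Ht) hT
      ltac:(specialize (h2 t Ht); lra) ltac:(lra) ltac:(lra)).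
    unfold Rdiv in *. lra.
Qed.
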